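(* Let $u$ be the field with $u(x+\tfrac12,t+\tfrac12)=-1$ if both integers $x$ and $t$ are even and $u(x+\tfrac12,t+\tfrac12)=+1$ otherwise. For integers $x,t$ with $x+t$ even and $t>0$ set $b_1(x,t)=a_1(2x-1,2t-1,u)$ and $b_2(x,t)=a_2(2x-1,2t-1,u)$, and for $x+t$ odd set $b_1(x,t)=b_2(x,t)=0$. Then for all integers $x,t$ with $x+t$ even and $t>1$: $$b_1(x,t)=\tfrac12\big[b_1(x+1,t-1)+b_2(x+1,t-1)\big],\qquad b_2(x,t)=\tfrac12\big[3\,b_1(x-1,t-1)-b_2(x-1,t-1)\big].$$
   Context: A checker path is a finite sequence of integer points $s_0,s_1,\dots,s_t$ in the plane such that each vector $s_{k+1}-s_k$ equals $(1,1)$ or $(-1,1)$. A turn is a point $s_k$ with $0<k<t$ such that the vectors $s_{k+1}-s_k$ and $s_{k-1}-s_k$ are orthogonal; $\mathrm{turns}(s)$ is the number of turns. An edge is a segment joining two diagonally adjacent integer points (differing by $(\pm1,1)$) whose coordinate sums are even; every step $s_ks_{k+1}$ of a checker path starting at $(0,0)$ is an edge. A field is a map $u$ from edges to $\{-1,1\}$; for half-integers $x,t$, $u(x,t)$ denotes the value of $u$ on the edge with midpoint $(x,t)$. For integers $x$ and $t\ge 1$ define $$a(x,t,u):=2^{(1-t)/2}\, i\sum_s(-i)^{\mathrm{turns}(s)}u(s_0s_1)u(s_1s_2)\cdots u(s_{t-1}s_t),$$ the sum over all checker paths $s=(s_0,\dots,s_t)$ with $s_0=(0,0)$, $s_1=(1,1)$,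 $s_t=(x,t)$ (an empty sum is $0$). Let $a_1(x,t,u)$ and $a_2(x,t,u)$ be the real and imaginary parts of $a(x,t,u)$. *)

From HB Require Import structures.
From mathcomp Require Import all_boot all_order all_algebra algC.
Set Implicit Arguments. Unset Strict Implicit. Unset Printing Implicit Defensive.
Import Order.TTheory GRing.Theory Num.Theory.
Local Open Scope ring_scope.

(* A checker path starting at (0,0) with t steps is encoded by the sequence
   s : t.-tuple bool of its horizontal steps (true = step (1,1),
   false = step (-1,1)). *)
Definition dstep (b : bool) : int := if b then 1 else -1.

(* x-coordinate of s_k (the t-coordinate of s_k is k). *)
Definition pos (s : seq bool) (k : nat) : int :=
  \sum_(j < k) dstep (nth false s j).

(* number of turns: indices 0<k<t where the direction changes (this is exactly
   the orthogonality of s_{k+1}-s_k and s_{k-1}-s_k). *)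
Definition turns (s : seq bool) : nat :=
  \sum_(1 <= k < size s) (nth false s k.-1 != nth false s k : nat).

(* A field.  Every edge joining points with even coordinate sum has midpoint
   (X+1/2, T+1/2) for integers X, T; we encode u by  fu X T := u(X+1/2,T+1/2). *)
Definition field := int -> int -> algC.

(* value of u on the k-th step s_k s_{k+1}: its midpoint is
   (pos s k + dstep/2, k + 1/2) = (X + 1/2, k + 1/2). *)
Definition step_mid_x (s : seq bool) (k : nat) : int :=
  pos s k - (~~ nth false s k : bool)%:Z.

Definition weight (u : field) (s : seq bool) : algC :=
  \prod_(k < size s) u (step_mid_x s k) k%:Z.

(* a(x,t,u) = 2^{(1-t)/2} i sum_s (-i)^turns(s) u(s0s1)...u(s_{t-1}s_t),
   over paths with s_0=(0,0), s_1=(1,1), s_t=(x,t).  Meaningful for t >= 1. *)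
Definition a (x : int) (t : nat) (u : field) : algC :=
  ((sqrtC 2) ^+ t.-1)^-1 * 'i *
  \sum_(s : t.-tuple bool | nth false s 0 && (pos s t == x))
     (- 'i) ^+ turns s * weight u s.

Definition a1 x t u : algC := 'Re (a x t u).
Definition a2 x t u : algC := 'Im (a x t u).

Definition u0 : field :=
  fun X T => if (2 %| X)%Z && (2 %| T)%Z then -1 else 1.

(* b1, b2: defined as in the paper for x+t even and t>0, zero for x+t odd;
   the remaining case (x+t even, t<=0) is never used and set to 0. *)
Definition b1 (x t : int) : algC :=
  if (2 %| x + t)%Z then (if 0 < t then a1 (2 * x - 1) (absz (2 * t - 1)%R) u0 else 0)
  else 0.
Definition b2 (x t : int) : algC :=
  if (2 %| x + t)%Z then (if 0 < t then a2 (2 * x - 1) (absz (2 * t - 1)%R) u0 else 0)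
  else 0.

(* Encode a path by its sequence of steps and split the sum defining a(x,t,u)
   according to the direction of the last step.  Appending a step multiplies a
   path's term by the value of u on the new edge and, at a turn, by -i, so the
   two partial sums obey a linear recursion in t.  For a field with
   integer values the partial sums are integers, up to a factor -i on the
   second one, so a1 and a2 are 2^((1-t)/2) times integer sequences obeying an
   integer recursion.  For u0, which is 1 at odd times, two steps of that
   recursion link time 2m+2 at abscissa y to time 2m at y and y +- 2.  On the
   residue class of y that matters (y = 2x - 1 with x + t even), the two
   integer components coincide and are shifted copies of each other; this
   collapses the double step to the stated identities, and the factor 1/2 is
   the square of 2^(-1/2). *)

From HB Require Import structures.
From mathcomp Require Import all_boot all_order all_algebra algC ring zify.
Import Order.TTheory GRing.Theory Num.Theory.
Local Open Scope ring_scope.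

Fixpoint bool_seqs (n : nat) : seq (seq bool) :=
  if n is n'.+1 then [seq rcons s true | s <- bool_seqs n'] ++
                     [seq rcons s false | s <- bool_seqs n']
  else [:: [::]].

Lemma mem_bool_seqs n s : (s \in bool_seqs n) = (size s == n).
Proof.
elim: n s => [|n IH] s; first by case: s.
rewrite mem_cat; apply/idP/idP.
  by case/orP=> /mapP [s' s'_in ->]; rewrite size_rcons eqSS -IH.
case/lastP: s => [//|s b]; rewrite size_rcons eqSS -IH => s_in.
by case: b; [rewrite (map_f (rcons^~ true)) | rewrite orbC (map_f (rcons^~ false))].
Qed.

Lemma uniq_bool_seqs n : uniq (bool_seqs n).
Proof.
elim: n => [//|n IH] /=.
rewrite cat_uniq !(map_inj_uniq (@rcons_injl _ _)) IH andbT /=.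
by apply/hasP => -[s /mapP [s1 _ ->] /mapP [s2 _ /rcons_inj]] [].
Qed.

Lemma big_tuple_bool_seqs (R : nmodType) n (F : seq bool -> R) :
  \sum_(s : n.-tuple bool) F s = \sum_(s <- bool_seqs n) F s.
Proof.
rewrite -(big_map val xpredT F); apply/perm_big/uniq_perm.
- by rewrite (map_inj_uniq val_inj) index_enum_uniq.
- exact: uniq_bool_seqs.
move=> s; rewrite mem_bool_seqs; apply/mapP/eqP => [[s' _ ->]|Hs].
  exact: size_tuple.
by exists (Tuple (introT eqP Hs)); rewrite ?mem_index_enum.
Qed.

Lemma big_bool_seqsS (R : nmodType) n (F : seq bool -> R) :
  \sum_(s <- bool_seqs n.+1) F s =
  \sum_(s <- bool_seqs n) (F (rcons s true) + F (rcons s false)).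
Proof. by rewrite /= big_cat !big_map big_split. Qed.

Lemma pos_rcons s b k : (k <= size s)%N -> pos (rcons s b) k = pos s k.
Proof.
move=> le_k_s; apply: eq_bigr => j _.
by rewrite nth_rcons (leq_trans (ltn_ord j) le_k_s).
Qed.

Lemma pos_rcons_size s b : pos (rcons s b) (size s).+1 = pos s (size s) + dstep b.
Proof.
rewrite /pos big_ord_recr /= nth_rcons ltnn eqxx; congr (_ + _).
by apply: eq_bigr => j _; rewrite nth_rcons ltn_ord.
Qed.

Lemma turns_rcons s b : (0 < size s)%N ->
  turns (rcons s b) = (turns s + (nth false s (size s).-1 != b))%N.
Proof.
move=> s_gt0; rewrite /turns size_rcons big_nat_recr //=.
rewrite !nth_rcons ltnn eqxx prednK // leqnn; congr (_ + _)%N.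
apply: eq_big_nat => k /andP [_ lt_k_s].
by rewrite !nth_rcons lt_k_s (leq_ltn_trans (leq_pred k) lt_k_s).
Qed.

Lemma weight_rcons u s b :
  weight u (rcons s b) = weight u s * u (pos s (size s) - (~~ b)%:Z) (size s)%:Z.
Proof.
rewrite /weight size_rcons big_ord_recr /= /step_mid_x pos_rcons //.
rewrite nth_rcons ltnn eqxx; congr (_ * _); apply: eq_bigr => j _.
by rewrite pos_rcons ?nth_rcons ?ltn_ord 1?ltnW.
Qed.

Section Amplitude.

Variable u : field.

Definition amp_term (n : nat) (x : int) (d : bool) (s : seq bool) : algC :=
  if [&& nth false s 0, pos s n == x & nth false s n.-1 == d]
  then (- 'i) ^+ turns s * weight u s else 0.

Definition amp (n : nat) (x : int) (d : bool) : algC :=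
  \sum_(s <- bool_seqs n) amp_term n x d s.

Lemma amp_term_rcons s x d : (0 < size s)%N ->
  amp_term (size s).+1 x d (rcons s true) + amp_term (size s).+1 x d (rcons s false) =
  u (x - dstep d - (~~ d)%:Z) (size s)%:Z *
    (amp_term (size s) (x - dstep d) d s - 'i * amp_term (size s) (x - dstep d) (~~ d) s).
Proof.
move=> s_gt0; rewrite /amp_term /= !nth_rcons s_gt0 ltnn eqxx.
rewrite !pos_rcons_size !turns_rcons // !weight_rcons.
move: (pos s _) (nth false s 0) (nth false s (size s).-1) (turns s) (weight u s) => p c e k w.
have shift b : (p + dstep b == x) = (p == x - dstep b).
  by rewrite [RHS]eq_sym subr_eq eq_sym.
rewrite !shift; case: c => /=; last by rewrite !(mulr0, subr0, addr0).
case: d e => -[] /=; rewrite ?andbT ?andbF ?addr0 ?add0r ?subr0 ?opprK;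
  case: eqP => [->|_]; rewrite ?(mulr0, oppr0, subr0, addr0, addn0, addn1, exprS) //; ring.
Qed.

Lemma ampSS n x d :
  amp n.+2 x d = u (x - dstep d - (~~ d)%:Z) n.+1%:Z *
    (amp n.+1 (x - dstep d) d - 'i * amp n.+1 (x - dstep d) (~~ d)).
Proof.
rewrite /amp big_bool_seqsS mulr_sumr -sumrB mulr_sumr !big_seq.
apply: eq_bigr => s; rewrite mem_bool_seqs => /eqP s_n.
by rewrite -s_n amp_term_rcons // s_n.
Qed.

Lemma a_amp n x :
  a x n.+1 u = ((sqrtC 2) ^+ n)^-1 * 'i * (amp n.+1 x true + amp n.+1 x false).
Proof.
rewrite /a /amp -big_split -big_tuple_bool_seqs big_mkcond; congr (_ * _).
apply: eq_bigr => s _; rewrite /amp_term /=.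
by case: (nth false s 0) (pos s _ == x) (nth false s n) => -[] -[]; rewrite ?addr0 ?add0r.
Qed.

End Amplitude.

Lemma real_sqrt2_invX n : ((sqrtC 2) ^+ n)^-1 \is @Num.real algC.
Proof. by rewrite rpredV rpredX // ger0_real // sqrtC_ge0 ler0n. Qed.

Lemma mulr_iNi (y : algC) : 'i * (- 'i * y) = y.
Proof. by rewrite mulrA mulrN -expr2 sqrCi opprK mul1r. Qed.

Section IntegerField.

Variables (u : field) (v : int -> int -> int).
Hypothesis uE : forall X T, u X T = (v X T)%:~R.

Fixpoint amp_int (n : nat) (x : int) : int * int :=
  if n is n'.+1 then
    (v (x - 1) n%:Z * ((amp_int n' (x - 1)).1 - (amp_int n' (x - 1)).2),
     v x n%:Z * ((amp_int n' (x + 1)).1 + (amp_int n' (x + 1)).2))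
  else (if x == 1 then v 0 0 else 0, 0).

Lemma amp_amp_int n x :
  amp u n.+1 x true = (amp_int n x).1%:~R /\
  amp u n.+1 x false = - 'i * (amp_int n x).2%:~R.
Proof.
elim: n x => [|n IH] x.
  have pos1 : pos [:: true] 1 = 1 by rewrite /pos big_ord1.
  have turns1 : turns [:: true] = 0%N by rewrite /turns big_geq.
  have weight1 : weight u [:: true] = u 0 0 by rewrite /weight big_ord1 /step_mid_x /pos big_ord0.
  rewrite /amp /amp_term /= !big_cons big_nil /= pos1 turns1 weight1 uE eq_sym.
  by rewrite big_nil andbT andbF !addr0 expr0 mul1r mulr0; case: (x == 1).
rewrite !ampSS /= subr0 opprK addrK.
have [-> ->] := IH (x - 1); have [-> ->] := IH (x + 1).
rewrite !uE !(intrM, intrB, intrD) mulr_iNi; split; ring.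
Qed.

Lemma a_amp_int n x : a x n.+1 u =
  ((sqrtC 2) ^+ n)^-1 * (amp_int n x).2%:~R + 'i * (((sqrtC 2) ^+ n)^-1 * (amp_int n x).1%:~R).
Proof.
rewrite a_amp; have [-> ->] := amp_amp_int n x.
by rewrite mulrDr -[_ * 'i * (- 'i * _)]mulrA mulr_iNi addrC; ring.
Qed.

Lemma a1_amp_int n x : a1 x n.+1 u = ((sqrtC 2) ^+ n)^-1 * (amp_int n x).2%:~R.
Proof. by rewrite /a1 a_amp_int Re_rect // rpredM ?realz ?real_sqrt2_invX. Qed.

Lemma a2_amp_int n x : a2 x n.+1 u = ((sqrtC 2) ^+ n)^-1 * (amp_int n x).1%:~R.
Proof. by rewrite /a2 a_amp_int Im_rect // rpredM ?realz ?real_sqrt2_invX. Qed.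

End IntegerField.

Lemma sqrt2_invXSS n : ((sqrtC 2) ^+ n.+2)^-1 = 2^-1 * ((sqrtC 2) ^+ n)^-1 :> algC.
Proof. by rewrite !exprSr -mulrA -expr2 sqrtCK invfM mulrC. Qed.

Definition u0_int (X T : int) : int := if (2 %| X)%Z && (2 %| T)%Z then -1 else 1.

Lemma u0E X T : u0 X T = (u0_int X T)%:~R.
Proof. by rewrite /u0 /u0_int; case: ifP. Qed.

Local Notation amp0 := (amp_int u0_int).

(* u0 is 1 at odd times, and at the even time 2m+2 it is -1 exactly at the
   even abscissa y - 1. *)
Lemma amp0SS m y : ~~ (2 %| y)%Z ->
  (amp0 (2 * m).+2 y).2 = (amp0 (2 * m) y).1 - (amp0 (2 * m) y).2 +
                          (amp0 (2 * m) (y + 2)).1 + (amp0 (2 * m) (y + 2)).2 /\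
  (amp0 (2 * m).+2 y).1 = (amp0 (2 * m) y).1 + (amp0 (2 * m) y).2 -
                          (amp0 (2 * m) (y - 2)).1 + (amp0 (2 * m) (y - 2)).2.
Proof.
move=> /negbTE y_odd /=.
have -> : y + 1 - 1 = y by rewrite addrK.
have -> : y - 1 + 1 = y by rewrite subrK.
have -> : y + 1 + 1 = y + 2 by rewrite -addrA.
have -> : y - 1 - 1 = y - 2 by rewrite -addrA -opprD.
have odd_time : (2 %| (2 * m).+1%:Z)%Z = false by lia.
have even_time : (2 %| (2 * m).+2%:Z)%Z by lia.
have even_pred : (2 %| y - 1)%Z by lia.
rewrite /u0_int odd_time even_time even_pred y_odd !andbF /=; split; ring.
Qed.

(* With m = t - 2, the congruence says that y = 2x - 1 for an x with x + t even. *)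
Lemma amp0_balanced m y : (4 %| y - 2 * m%:Z - 3)%Z ->
  (amp0 (2 * m) y).2 = (amp0 (2 * m) y).1 /\
  (amp0 (2 * m) y).1 = (amp0 (2 * m) (y - 2)).2.
Proof.
elim: m y => [|m IH] y y_mod.
  by rewrite /=; have -> : (y == 1) = false by apply/negbTE; lia.
rewrite mulnS.
have y_odd : ~~ (2 %| y)%Z by lia.
have y2_odd : ~~ (2 %| y - 2)%Z by lia.
have [A1 A2] := amp0SS m y y_odd.
have [B1 _] := amp0SS m (y - 2) y2_odd.
have [C1 C2] := IH (y + 2) ltac:(lia).
have [E1 E2] := IH (y - 2) ltac:(lia).
rewrite subrK in B1; rewrite addrK in C2.
by rewrite A1 A2 B1 C1 C2 E1; split; ring.
Qed.

Theorem proposition11 (x t : int) :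
  (2 %| x + t)%Z -> 1 < t ->
  b1 x t = 2^-1 * (b1 (x + 1) (t - 1) + b2 (x + 1) (t - 1)) /\
  b2 x t = 2^-1 * (3 * b1 (x - 1) (t - 1) - b2 (x - 1) (t - 1)).
Proof.
move=> xt_even t_gt1; have [p tE] : exists p : nat, t = p.+2%:Z.
  by exists (absz t - 2)%N; lia.
subst t.
have len_t : absz (2 * p.+2%:Z - 1)%R = (2 * p).+3 by lia.
have len_t1 : absz (2 * (p.+2%:Z - 1) - 1)%R = (2 * p).+1 by lia.
have shiftR : 2 * (x + 1) - 1 = 2 * x - 1 + 2 by ring.
have shiftL : 2 * (x - 1) - 1 = 2 * x - 1 - 2 by ring.
have evenR : (2 %| x + 1 + (p.+2%:Z - 1))%Z by lia.
have evenL : (2 %| x - 1 + (p.+2%:Z - 1))%Z by lia.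
have t_pos : 0 < p.+2%:Z by [].
have t1_pos : 0 < p.+2%:Z - 1 by lia.
rewrite /b1 /b2 xt_even evenR evenL t_pos t1_pos len_t len_t1 shiftR shiftL.
rewrite !(a1_amp_int _ _ u0E) !(a2_amp_int _ _ u0E) sqrt2_invXSS.
have y_odd : ~~ (2 %| 2 * x - 1)%Z by lia.
have y_mod : (4 %| 2 * x - 1 - 2 * p%:Z - 3)%Z by lia.
have [A1 A2] := amp0SS p (2 * x - 1) y_odd.
have [I1 I2] := amp0_balanced p (2 * x - 1) y_mod.
by rewrite A1 A2 I1 I2 !(intrD, intrB); split; ring.
Qed.
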